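(* Let $X$ be a topological vector space over $\mathbb{K}$ ($\mathbb{K}=\mathbb{R}$ or $\mathbb{C}$), let $Y$ be a linear subspace of $X$, and let $\alpha$ be a cardinal with $w(X)\le \mathrm{codim}(Y)=\alpha$. Then $X\setminus Y$ is $\alpha$-dense-lineable in $X$, i.e., there is a dense linear subspace $Z$ of $X$ with $\dim(Z)=\alpha$ and $Z\subset (X\setminus Y)\cup\{0\}$.
   Context: A topological vector space is a vector space with a topology making addition and scalar multiplication continuous. The weight $w(X)$ of a topological space $X$ is the smallest cardinality of a base for its topology. $\mathrm{codim}(Y)$ denotes the dimension of the quotient $X/Y$. *)

From HB Require Import structures.
From mathcomp Require Import all_boot all_order all_algebra.
From mathcomp Require Import all_classical all_reals all_analysis.
From mathcomp Require Import complex.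
Set Implicit Arguments. Unset Strict Implicit. Unset Printing Implicit Defensive.
Import Order.TTheory GRing.Theory Num.Theory.
Local Open Scope classical_set_scope.
Local Open Scope ring_scope.

Section LinAlg.
Variables (K : numDomainType) (X : lmodType K).

Definition lin_subspace (Y : set X) : Prop :=
  Y 0 /\ forall (a : K) (x y : X), Y x -> Y y -> Y (a *: x + y).

Definition lin_span (S : set X) : set X :=
  [set x | exists (s : seq X) (c : X -> K),
     (forall v, v \in s -> S v) /\ x = \sum_(v <- s) c v *: v].

(* S is linearly independent modulo Y (i.e. its image in X/Y is
   linearly independent and S maps injectively to X/Y) *)
Definition lin_indep_mod (Y S : set X) : Prop :=
  forall (s : seq X) (c : X -> K), uniq s -> (forall v, v \in s -> S v) ->
    Y (\sum_(v <- s) c v *: v) -> forall v, v \in s -> c v = 0.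

Definition lin_indep (S : set X) : Prop := lin_indep_mod [set 0] S.

(* codim(Y) = |A| : X/Y has a basis (the image of C) of cardinality |A| *)
Definition codim_eq (Y : set X) (A : Type) : Prop :=
  exists C : set X, lin_indep_mod Y C /\
    (forall x : X, exists y z, Y y /\ lin_span C z /\ x = y + z) /\
    (C #= [set: A])%card.

Definition dim_eq (Z : set X) (A : Type) : Prop :=
  exists S : set X, lin_indep S /\ lin_span S = Z /\ (S #= [set: A])%card.
End LinAlg.

Definition is_top_base (T : topologicalType) (B : set (set T)) : Prop :=
  (forall U, B U -> open U) /\
  (forall U, open U -> forall x, U x -> exists V, B V /\ V x /\ V `<=` U).

Definition weight_le (T : topologicalType) (A : Type) : Prop :=
  exists B : set (set T), is_top_base B /\ (B #<= [set: A])%card.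

Definition dense_lineable_claim (K : numDomainType) (X : topologicalLmodType K)
    (Y : set X) (A : Type) : Prop :=
  lin_subspace Y -> weight_le X A -> codim_eq Y A ->
  exists Z : set X, lin_subspace Z /\ dense Z /\ dim_eq Z A /\
    Z `<=` (~` Y) `|` [set 0].

From HB Require Import structures.
From mathcomp Require Import all_boot all_order all_algebra.
From mathcomp Require Import all_classical all_reals all_analysis.
From mathcomp Require Import complex.
Set Implicit Arguments. Unset Strict Implicit. Unset Printing Implicit Defensive.
Import Order.TTheory GRing.Theory Num.Theory.
Local Open Scope classical_set_scope.
Local Open Scope ring_scope.

(* Fix a base of the topology indexed by A, with its empty members replaced by
   the whole space, and a family g indexed by A that is injective and linearly
   independent modulo Y (it exists because codim Y = |A|).  Zorn's lemma, applied
   to partial modifications of g ordered by extension, moves every g a into the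
   a-th basic open set while keeping the family independent modulo Y.  A single
   vector can always be moved: Y plus the span of the other vectors is a proper
   subspace, and a proper subspace of a topological vector space has empty
   interior.  The span of the moved family meets every nonempty open set, has
   dimension |A|, and meets Y only in 0. *)

Section PartialFunctionZorn.
Variables (A : eqType) (B : Type).
Implicit Types f g h : A -> option B.

Definition pfun_le f g := forall a b, f a = Some b -> g a = Some b.

Lemma pfun_le_agree f g h :
  pfun_le f g -> pfun_le g h -> forall a, h a = f a -> h a = g a.
Proof.
move=> fg gh a; case ha : (h a) => [b|] hfa; first by rewrite (fg a b).
by case ga : (g a) => [b|] //; move: (gh a b ga); rewrite ha.
Qed.

Section ChainSupremum.
Variable C : set (A -> option B).
Hypothesis C_total : total_on C pfun_le.

Definition pfun_sup a : option B :=
  if pselect (exists b, exists2 f, C f & f a = Some b) is left e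
  then Some (projT1 (cid e)) else None.

Lemma pfun_supP a b : pfun_sup a = Some b <-> exists2 f, C f & f a = Some b.
Proof.
rewrite /pfun_sup; case: pselect => [e|ne]; last first.
  by split=> // fab; case: ne; exists b.
case: (cid e) => b' [f Cf fab'] /=; split=> [[<-]|[g Cg gab]]; first by exists f.
by have [/(_ a b' fab')|/(_ a b gab)] := C_total Cf Cg; rewrite ?gab ?fab' => -[->].
Qed.

Lemma pfun_le_sup f : C f -> pfun_le f pfun_sup.
Proof. by move=> Cf a b fab; apply/pfun_supP; exists f. Qed.

Lemma pfun_sup_finite (bs : seq A) :
  exists2 f, f = (fun=> None) \/ C f & {in bs, pfun_sup =1 f}.
Proof.
elim: bs => [|b bs [f Cf supf]]; first by exists (fun=> None); [left|].
have f_sup : pfun_le f pfun_sup by case: Cf => [->|/pfun_le_sup].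
case supb : (pfun_sup b) => [x|]; last first.
  exists f => // a; rewrite inE => /predU1P[->|/supf//].
  by rewrite supb; case fb : (f b) => [y|] //; move: (f_sup b y fb); rewrite supb.
have [g Cg gb] := proj1 (pfun_supP b x) supb.
have [fg|gf] : pfun_le f g \/ pfun_le g f by case: Cf => [->|Cf]; [left|exact: C_total].
- exists g; first by right.
  move=> a; rewrite inE => /predU1P[->|/supf]; first by rewrite supb gb.
  exact: (pfun_le_agree fg (pfun_le_sup Cg)).
- exists f => // a; rewrite inE => /predU1P[->|/supf//].
  by rewrite supb (gf b x gb).
Qed.

End ChainSupremum.

Variable P : set (A -> option B).
Hypothesis P_none : P (fun=> None).
Hypothesis P_finite :
  forall f, (forall bs : seq A, exists2 g, P g & {in bs, f =1 g}) -> P f.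

Lemma pfun_zorn : exists2 f, P f & forall g, P g -> pfun_le f g -> pfun_le g f.
Proof.
pose R (s t : {f | P f}) := `[< pfun_le (sval s) (sval t) >].
have [||C C_total|[f Pf] fmax] := @ZL_preorder _ (exist _ _ P_none) R.
- by move=> s; apply/asboolP.
- by move=> r s t /asboolP rs /asboolP st; apply/asboolP => a b /rs /st.
- have sC_total : total_on (sval @` C) pfun_le.
    move=> _ _ [s Cs <-] [t Ct <-].
    by have [/asboolP|/asboolP] := C_total _ _ Cs Ct; [left|right].
  have Psup : P (pfun_sup (sval @` C)).
    apply: P_finite => bs; have [f Cf supf] := pfun_sup_finite sC_total bs.
    by exists f => //; case: Cf => [->|[s _ <-]] //; exact: svalP.
  exists (exist _ _ Psup) => s Cs; apply/asboolP.
  exact/pfun_le_sup/imageP.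
- by exists f => // g Pg fg; apply/asboolP/(fmax (exist _ g Pg))/asboolP.
Qed.

End PartialFunctionZorn.

Lemma sum_count_uniq (I : eqType) (V : nmodType) (t s : seq I) (F : I -> V) :
  uniq t -> {subset s <= t} ->
  \sum_(i <- s) F i = \sum_(i <- t) F i *+ count_mem i s.
Proof.
move=> ut; elim: s => [_|j s IH sub]; first by rewrite big_nil big1 // => i _.
rewrite big_cons IH => [|i si]; last by rewrite sub // inE si orbT.
under [RHS]eq_bigr do rewrite /= mulrnDr.
rewrite big_split /=; congr (_ + _).
rewrite -(big_seq1 +%R j F) -(filter_pred1_uniq ut (sub j (mem_head j s))).
by rewrite big_filter big_mkcond; apply: eq_bigr => i _; rewrite /= eq_sym; case: eqP.
Qed.

Section LinearCombinations.
Variables (K : numFieldType) (X : lmodType K).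
Implicit Types (Y S : set X) (x z : X).

Lemma lin_subspaceZ Y a x : lin_subspace Y -> Y x -> Y (a *: x).
Proof. by move=> [Y0 Ylin] Yx; rewrite -[_ *: _]addr0; exact: Ylin. Qed.

Lemma lin_span_sub S : S `<=` lin_span S.
Proof.
move=> x Sx; exists [:: x], (fun=> 1).
by rewrite big_seq1 scale1r; split=> // v /[1!inE] /eqP ->.
Qed.

Lemma lin_span_uniq S x : lin_span S x -> exists s (c : X -> K),
  [/\ uniq s, forall v, v \in s -> S v & x = \sum_(v <- s) c v *: v].
Proof.
move=> [s [c [sS ->]]]; exists (undup s), (fun v => c v *+ count_mem v s).
split; first exact: undup_uniq.
  by move=> v; rewrite mem_undup; exact: sS.
rewrite (sum_count_uniq _ (undup_uniq s)) => [|v]; last by rewrite mem_undup.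
by apply: eq_bigr => v _; rewrite scalerMnl.
Qed.

Lemma lin_span_subspace S : lin_subspace (lin_span S).
Proof.
split; first by exists [::], (fun=> 0); rewrite big_nil.
move=> a _ _ [s [c [sS ->]]] [s' [c' [s'S ->]]].
pose t := undup (s ++ s').
have st : {subset s <= t} by move=> v vs; rewrite mem_undup mem_cat vs.
have s't : {subset s' <= t} by move=> v vs; rewrite mem_undup mem_cat vs orbT.
exists t, (fun v => a * (c v *+ count_mem v s) + c' v *+ count_mem v s').
split; first by move=> v; rewrite mem_undup mem_cat => /orP[/sS|/s'S].
rewrite (sum_count_uniq _ (undup_uniq _) st) (sum_count_uniq _ (undup_uniq _) s't).
rewrite scaler_sumr -big_split; apply: eq_bigr => v _.
by rewrite scalerDl -scalerA !scalerMnl.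
Qed.

Definition lin_span_mod Y S := [set y + z | y in Y & z in lin_span S].

Lemma lin_span_mod_subspace Y S : lin_subspace Y -> lin_subspace (lin_span_mod Y S).
Proof.
move=> subY; have [span0 spanlin] := lin_span_subspace S.
split; first by exists 0; [exact: subY.1 | exists 0; rewrite ?addr0].
move=> a _ _ [y Yy [z Sz <-]] [y' Yy' [z' Sz' <-]].
exists (a *: y + y'); first exact: subY.2.
by exists (a *: z + z'); [exact: spanlin | rewrite scalerDr addrACA].
Qed.

Lemma sub_lin_span_mod Y S : Y 0 -> S `<=` lin_span_mod Y S.
Proof. by move=> Y0 x /lin_span_sub Sx; exists 0 => //; exists x; rewrite ?add0r. Qed.

Lemma lin_indep_modS Y S S' : S' `<=` S -> lin_indep_mod Y S -> lin_indep_mod Y S'.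
Proof. by move=> S'S indS s c us sS'; apply: indS => // v /sS' /S'S. Qed.

Lemma lin_indep_modW Y Y' S : Y' `<=` Y -> lin_indep_mod Y S -> lin_indep_mod Y' S.
Proof. by move=> Y'Y indS s c us sS /Y'Y; exact: indS. Qed.

Lemma lin_indep_mod_span0 Y S x : lin_indep_mod Y S -> lin_span S x -> Y x -> x = 0.
Proof.
move=> indS /lin_span_uniq[s [c [us sS ->]]] Yx.
by apply: big1_seq => v /andP[_ vs]; rewrite (indS s c us sS Yx v vs) scale0r.
Qed.

Lemma lin_indep_mod_notin Y S v : lin_indep_mod Y S -> S v ->
  ~ lin_span_mod Y (S `\ v) v.
Proof.
move=> indS Sv [y Yy [_ /lin_span_uniq[s [c [us sS ->]]] vE]].
have vNs : v \notin s by apply/negP => /sS[_ /eqP]; rewrite eqxx.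
pose d w := if w == v then 1 else - c w.
suff : d v = 0 by rewrite /d eqxx => /eqP; rewrite oner_eq0.
apply: (indS (v :: s)); rewrite ?mem_head //=.
- by rewrite vNs.
- by move=> w /[1!inE] /predU1P[->|/sS[]].
rewrite big_cons /d eqxx scale1r.
rewrite (eq_big_seq (fun w => - (c w *: w))) => [|w ws]; last first.
  by rewrite ifN ?scaleNr //; apply: contraNneq vNs => <-.
by rewrite sumrN -vE addrK.
Qed.

Lemma lin_indep_mod_setU1 Y S z : lin_subspace Y -> lin_indep_mod Y S ->
  ~ lin_span_mod Y S z -> lin_indep_mod Y (z |` S).
Proof.
move=> subY indS zNspan s c us sS Ysum.
have [zs|zNs] := boolP (z \in s); last first.
  apply: indS us _ Ysum => v vs; case: (sS v vs) => // vz.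
  by move: zNs; rewrite -vz vs.
have remS v : v \in rem z s -> S v.
  rewrite mem_rem_uniq // inE => /andP[vz /sS[/eqP|//]].
  by rewrite (negPf vz).
have sumE := big_rem z zs; rewrite {}sumE /= in Ysum.
have cz0 : c z = 0.
  apply: contra_notP zNspan => /eqP czN0.
  exists ((c z)^-1 *: (c z *: z + \sum_(w <- rem z s) c w *: w)).
    exact: lin_subspaceZ.
  exists (\sum_(w <- rem z s) (- ((c z)^-1 * c w)) *: w).
    by exists (rem z s), (fun w => - ((c z)^-1 * c w)).
  rewrite scalerDr scalerA mulVf // scale1r scaler_sumr -addrA -big_split /=.
  by rewrite big1 ?addr0 // => w _; rewrite scalerA scaleNr subrr.
rewrite cz0 scale0r add0r in Ysum.
move=> v; have [->//|vz vs] := eqVneq v z.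
by apply: (indS _ _ (rem_uniq z us) remS Ysum); rewrite mem_rem_uniq // inE vz.
Qed.

End LinearCombinations.

Section TopologicalLmodule.
Variables (K : numFieldType) (X : topologicalLmodType K).

Lemma open_line_nonzero (U : set X) (p v : X) : open U -> U p ->
  exists2 t : K, t != 0 & U (p + t *: v).
Proof.
move=> Uopen Up.
have tv_cvg : (fun t : K^o => t *: v) @ (0 : K^o)^' --> (0 : K^o) *: v.
  apply: (@continuous2_cvg _ K^o X X).
  - exact: (@scale_continuous K X (0, v)).
  - exact: nbhs_dnbhs.
  - exact: cvg_cst.
have : (fun t : K^o => p + t *: v) @ (0 : K^o)^' --> p + (0 : K^o) *: v.
  apply: (@continuous2_cvg _ X X X _ _ (fun=> p)) tv_cvg.
  - exact: (@add_continuous X (p, _)).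
  - exact: cvg_cst.
rewrite scale0r addr0 => /(_ U (open_nbhs_nbhs (conj Uopen Up))) Unear.
by have [t [t0 Ut]] := filter_ex (filterI (nbhs_dnbhs_neq 0) Unear); exists t.
Qed.

Lemma open_not_subset_subspace (W U : set X) (v : X) : lin_subspace W -> ~ W v ->
  open U -> U !=set0 -> exists2 z, U z & ~ W z.
Proof.
move=> subW Wv Uopen [p Up]; have [Wp|] := pselect (W p); last by exists p.
have [t t0 Upt] := open_line_nonzero v Uopen Up.
exists (p + t *: v) => // Wpt; apply: Wv.
rewrite -(scalerK t0 v) -(addKr p (t *: v)) -scaleN1r.
by apply: lin_subspaceZ => //; exact: subW.2.
Qed.

End TopologicalLmodule.

Definition lin_indep_family_mod (K : numDomainType) (X : lmodType K) (A : Type)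
    (Y : set X) (F : A -> X) :=
  injective F /\ lin_indep_mod Y (range F).

Lemma seq_range_map (A : Type) (T : eqType) (F : A -> T) (s : seq T) :
  (forall v, v \in s -> range F v) -> exists bs, s = map F bs.
Proof.
elim: s => [|v s IH] sF; first by exists [::].
have [a _ <-] := sF v (mem_head v s).
have [|bs ->] := IH; first by move=> w ws; apply: sF; rewrite inE ws orbT.
by exists (a :: bs).
Qed.

Lemma lin_indep_family_mod_finite (K : numDomainType) (X : lmodType K) (A : eqType)
    (Y : set X) (F : A -> X) :
  (forall bs : seq A, exists2 G, lin_indep_family_mod Y G & {in bs, F =1 G}) ->
  lin_indep_family_mod Y F.
Proof.
move=> Floc; split.
  move=> a b Fab; have [G [Ginj _] FG] := Floc [:: a; b].
  by apply: Ginj; rewrite -!FG ?Fab // !inE eqxx ?orbT.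
move=> s c us sF; have [bs sE] := seq_range_map sF.
have [G [_ Gind] FG] := Floc bs.
by apply: Gind us _; rewrite sE => _ /mapP[b bbs ->]; rewrite FG //; exact: imageT.
Qed.

Section LinIndepFamily.
Variables (K : numFieldType) (X : topologicalLmodType K) (A : eqType).
Implicit Types (Y : set X) (F : A -> X).

Lemma lin_indep_family_mod_replace Y (U : set X) F a :
  lin_subspace Y -> lin_indep_family_mod Y F -> open U -> U !=set0 ->
  exists2 z, U z & lin_indep_family_mod Y (fun b => if b == a then z else F b).
Proof.
move=> subY [Finj Find] Uopen Une.
pose S := range F `\ F a.
have FS b : b != a -> S (F b).
  by move=> ba; split; [exact: imageT | move/Finj/eqP; exact/negP].
have [z Uz zNspan] : exists2 z, U z & ~ lin_span_mod Y S z.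
  apply: open_not_subset_subspace Uopen Une; first exact: lin_span_mod_subspace.
  exact: lin_indep_mod_notin Find (imageT F a).
have zNS : ~ S z by move/(sub_lin_span_mod subY.1).
exists z => //; split.
  move=> b b'; have [->|ba] := eqVneq b a; have [->//|b'a] := eqVneq b' a.
  - by move=> zF; case: zNS; rewrite zF; exact: FS.
  - by move=> Fz; case: zNS; rewrite -Fz; exact: FS.
  - exact: Finj.
apply: (@lin_indep_modS _ _ _ (z |` S)).
  by move=> _ [b _ <-]; case: eqVneq => [_|ba]; [left | right; exact: FS].
by apply: lin_indep_mod_setU1 zNspan => //; apply: lin_indep_modS Find => x [].
Qed.

Lemma lin_indep_family_mod_in_opens Y (U : A -> set X) (g : A -> X) :
  lin_subspace Y -> lin_indep_family_mod Y g -> (forall a, open (U a) /\ U a !=set0) ->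
  exists F, lin_indep_family_mod Y F /\ forall a, U a (F a).
Proof.
move=> subY gind Uopen.
pose complete (f : A -> option X) a := odflt (g a) (f a).
pose P f := (forall a x, f a = Some x -> U a x) /\ lin_indep_family_mod Y (complete f).
have [f [fU find] fmax] : exists2 f, P f & forall h, P h -> pfun_le f h -> pfun_le h f.
  apply: pfun_zorn => [|f floc]; first by split.
  split=> [a x fa|].
    by have [h [hU _] fh] := floc [:: a]; apply: hU; rewrite -fh ?mem_head.
  apply: lin_indep_family_mod_finite => bs; have [h [_ hind] fh] := floc bs.
  by exists (complete h) => // b /fh; rewrite /complete => ->.
exists (complete f); split => // a; rewrite /complete.
case fa : (f a) => [x|]; first exact: fU.
have [z Uz zind] := lin_indep_family_mod_replace a subY find (Uopen a).1 (Uopen a).2.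
pose h b := if b == a then Some z else f b.
have Ph : P h.
  split=> [b x|]; first by rewrite /h; case: eqP => [-> [<-]//|_]; exact: fU.
  congr (lin_indep_family_mod Y _): zind.
  by apply/funext => b; rewrite /complete /h; case: eqP.
have fh : pfun_le f h.
  by move=> b x fb; rewrite /h; case: eqP => // ba; rewrite ba fa in fb.
by have := fmax h Ph fh a z; rewrite /h eqxx fa => /(_ erefl).
Qed.

End LinIndepFamily.

Lemma weight_le_open_cover (T : topologicalType) (A : Type) (x0 : T) :
  weight_le T A -> exists U : A -> set T,
    (forall a, open (U a) /\ U a !=set0) /\
    forall V, open V -> V !=set0 -> exists a, U a `<=` V.
Proof.
move=> [B [[Bopen Bbase] /pfcard_geP[B0|/surjfunPex[e Be]]]].
  by have [V [+ _]] := Bbase _ openT x0 I; rewrite B0.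
pose U a := if pselect (e a !=set0) is left _ then e a else setT.
exists U; split=> [a|V Vopen [x Vx]].
  rewrite /U; case: pselect => [e0|_]; last by split; [exact: openT | exists x0].
  by split=> //; apply: Bopen; rewrite Be; exact: imageT.
have [W [BW [Wx WV]]] := Bbase V Vopen x Vx.
move: BW; rewrite Be => -[a _ eaW]; exists a.
by rewrite /U; case: pselect => [_|[]]; [rewrite eaW | exists x; rewrite eaW].
Qed.

Lemma codim_eq_lin_indep_family (K : numDomainType) (X : lmodType K)
    (Y : set X) (A : Type) :
  codim_eq Y A -> exists g : A -> X, lin_indep_family_mod Y g.
Proof.
move=> [C [Cind [_ /card_esym/card_bijP[f /(valLR_bijP 0)[gfun ginj gsurj]]]]].
exists (valLR 0 f); split; first exact: in2TT ginj.
suff -> : range (valLR 0 f) = C by [].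
apply/seteqP; split=> [_ [a _ <-]|x Cx]; first exact: gfun.
by have [a _ <-] := gsurj x Cx; exact: imageT.
Qed.

Lemma dense_lineable (K : numFieldType) (X : topologicalLmodType K) (Y : set X)
    (A : choiceType) :
  dense_lineable_claim Y A.
Proof.
move=> subY /(weight_le_open_cover 0)[U [Uopen Ucover]].
move=> /codim_eq_lin_indep_family[g gind].
have [F [[Finj Find] FU]] := lin_indep_family_mod_in_opens subY gind Uopen.
exists (lin_span (range F)); split; first exact: lin_span_subspace.
split=> [V V0 Vopen|].
  have [a UV] := Ucover V Vopen V0.
  by exists (F a); split; [exact/UV/FU | exact/lin_span_sub/imageT].
split.
  exists (range F); split; first by apply: lin_indep_modW Find => _ ->; exact: subY.1.
  by split=> //; exact: inj_card_eq (in2W Finj).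
move=> x Sx; have [Yx|] := pselect (Y x); last by left.
by right; exact: lin_indep_mod_span0 Find Sx Yx.
Qed.

Local Open Scope complex_scope.

Theorem lemma2p1 :
  (forall (R : realType) (X : topologicalLmodType R) (Y : set X) (A : Type),
      dense_lineable_claim Y A) /\
  (forall (R : realType) (X : topologicalLmodType R[i]) (Y : set X) (A : Type),
      dense_lineable_claim Y A).
Proof.
by split=> R X Y; elim/Pchoice; exact: dense_lineable.
Qed.
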